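(* Let $\bm\mu=(\mu_1,\dots,\mu_r)$ be finite positive Borel measures on the unit circle with infinite supports and let $\bm n,\bm m\in\mathbb N^r$. The following are equivalent: (a) $(\bm n,\bm m)$ is normal, i.e. there is a unique $\Phi\in\operatorname{span}\{z^p\}_{p=-|\bm m|}^{|\bm n|}$ with coefficient of $z^{|\bm n|}$ equal to $1$ satisfying $\int\Phi(w)w^{-p}\,d\mu_j(w)=0$ for $p=-m_j,\dots,n_j-1$, $j=1,\dots,r$; (b) there is no nonzero $\Phi\in\operatorname{span}\{z^p\}_{p=-|\bm m|}^{|\bm n|-1}$ satisfying the orthogonality relations in (a); (c) there is a unique $\Phi^*\in\operatorname{span}\{z^p\}_{p=-|\bm m|}^{|\bm n|}$ with coefficient of $z^{-|\bm m|}$ equal to $1$ satisfying $\int\Phi^*(w)w^{-p}\,d\mu_j(w)=0$ for $p=-m_j+1,\dots,n_j$, $j=1,\dots,r$; (d) there is no nonzero $\Phi^*\in\operatorname{span}\{z^p\}_{p=-|\bm m|+1}^{|\bm n|}$ satisfying the orthogonality relations in (c).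
   Context: $|\bm n|=n_1+\dots+n_r$ for $\bm n=(n_1,\dots,n_r)$ with non-negative integer entries; $\operatorname{span}\{z^p\}_{p=a}^b$ denotes the span of the monomials $z^a,z^{a+1},\dots,z^b$ (integer exponents). *)

From HB Require Import structures.
From mathcomp Require Import all_boot all_order all_algebra.
From mathcomp Require Import all_classical all_reals all_analysis.
From mathcomp Require Import complex.
Set Implicit Arguments. Unset Strict Implicit. Unset Printing Implicit Defensive.
Import Order.TTheory GRing.Theory Num.Theory.
Import numFieldNormedType.Exports.
Local Open Scope classical_set_scope.
Local Open Scope ring_scope.

(* The plane R^2 = R * R (with the product Borel sigma-algebra) models C;
   a measure on the unit circle is a measure on R * R carried by the circle. *)

Definition unit_circle (R : realType) : set (R * R) :=
  [set p | p.1 ^+ 2 + p.2 ^+ 2 = 1].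

Definition toC (R : realType) (p : R * R) : R[i] := Complex p.1 p.2.

Definition on_circle (R : realType) (mu : {measure set (R * R)%type -> \bar R}) :=
  mu (~` @unit_circle R) = 0%E.

Definition msupport (R : realType) (mu : {measure set (R * R)%type -> \bar R}) :
  set (R * R) :=
  [set x | forall e : R, 0 < e -> (0 < mu (ball x e))%E].

Definition cintegral (R : realType) (mu : {measure set (R * R)%type -> \bar R})
  (f : R * R -> R[i]) : R[i] :=
  Complex (Rintegral mu setT (fun w => complex.Re (f w)))
          (Rintegral mu setT (fun w => complex.Im (f w))).

(* Laurent polynomial z^a * P(z): elements of span{z^p}_{p=a}^{b} are exactly
   these with size P <= b - a + 1 *)
Definition lpoly (R : realType) (a : int) (P : {poly R[i]}) (z : R[i]) : R[i] :=
  z ^ a * P.[z].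

Definition sumn_vec (r : nat) (n : 'I_r -> nat) : nat := (\sum_(j < r) n j)%N.

Definition orth_typeI (R : realType) (r : nat)
  (mu : 'I_r -> {measure set (R * R)%type -> \bar R}) (n m : 'I_r -> nat)
  (Phi : R[i] -> R[i]) : Prop :=
  forall (j : 'I_r) (p : int), - (m j)%:Z <= p <= (n j)%:Z - 1 ->
    cintegral (mu j) (fun w => Phi (toC w) * toC w ^ (- p)) = 0.

Definition orth_typeII (R : realType) (r : nat)
  (mu : 'I_r -> {measure set (R * R)%type -> \bar R}) (n m : 'I_r -> nat)
  (Phi : R[i] -> R[i]) : Prop :=
  forall (j : 'I_r) (p : int), - (m j)%:Z + 1 <= p <= (n j)%:Z ->
    cintegral (mu j) (fun w => Phi (toC w) * toC w ^ (- p)) = 0.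

From HB Require Import structures.
From mathcomp Require Import all_boot all_order all_algebra.
From mathcomp Require Import all_classical all_reals all_analysis.
From mathcomp Require Import complex measurable_realfun.
From mathcomp Require Import ring zify.
Set Implicit Arguments. Unset Strict Implicit. Unset Printing Implicit Defensive.
Import Order.TTheory GRing.Theory Num.Theory.
Import numFieldNormedType.Exports.
Local Open Scope classical_set_scope.
Local Open Scope ring_scope.

(* Write Phi = z^(-|m|) P(z).  Each orthogonality relation is then a linear
   equation in the coefficients of P whose coefficients are moments
   int w^k dmu_j(w) (computed on the circle, where every w^k is bounded).
   Every condition involves |n| + |m| relations and |n| + |m| free
   coefficients, and shifting the exponents by one shows that the systems of
   (c) and (d) have the same matrix as those of (a) and (b); so each
   condition says that this square moment matrix is invertible. *)

Lemma exists_unique_param (X Y : Type) (f : X -> Y) (P : Y -> Prop) (Q : X -> Prop) :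
  injective f -> (forall y, P y -> exists x, y = f x) -> (forall x, P (f x) <-> Q x) ->
  (exists! y, P y) <-> (exists! x, Q x).
Proof.
move=> f_inj f_onto PQ; split.
  move=> [_ [/[dup] /f_onto [x ->] /PQ Qx Uy]]; exists x; split=> // x' /PQ /Uy.
  exact: f_inj.
move=> [x [/PQ Px Ux]]; exists (f x); split=> // y /[dup] /f_onto [x' ->] /PQ.
by move/Ux ->.
Qed.

Lemma mulmx_exists_unique_iff (F : fieldType) (m n : nat) (A : 'M[F]_(m, n))
    (b : 'rV_n) : m = n ->
  (exists! x : 'rV_m, x *m A = b) <-> (forall x : 'rV_m, x *m A = 0 -> x = 0).
Proof.
move=> emn; split.
  move=> [x [xAb Ux]] y yA0; apply: (addrI x); rewrite addr0 -[LHS]Ux //.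
  by rewrite mulmxDl xAb yA0 addr0.
subst n => ker0.
have /[!row_free_unit] Aunit : row_free A.
  rewrite -kermx_eq0; apply/eqP/row_matrixP => i; rewrite row0.
  by apply: ker0; rewrite -row_mul mulmx_ker row0.
exists (b *m invmx A); split=> [|x <-]; first by rewrite mulmxKV.
by rewrite mulmxK.
Qed.

Section MomentSystem.
Variables (F : fieldType) (T : finType) (K : nat).
Implicit Types (c : nat -> T -> F) (P : {poly F}) (x : 'rV[F]_K).

Definition moment_cond c P t := \sum_(i < K.+1) P`_i * c i t.

Definition moment_mx c : 'M[F]_(K, #|T|) := \matrix_(i, s) c i (enum_val s).

Lemma moment_mx_row c x t :
  (x *m moment_mx c) 0 (enum_rank t) = \sum_(i < K) x 0 i * c i t.
Proof. by rewrite mxE; apply: eq_bigr => i _; rewrite mxE enum_rankK. Qed.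

Lemma moment_cond_small c P t : (size P <= K)%N ->
  moment_cond c P t = \sum_(i < K) P`_i * c i t.
Proof. by move=> sP; rewrite /moment_cond big_ord_recr /= nth_default ?mul0r ?addr0. Qed.

Lemma moment_cond_rVpoly c x t :
  moment_cond c (rVpoly x) t = (x *m moment_mx c) 0 (enum_rank t).
Proof.
rewrite moment_cond_small ?size_poly // moment_mx_row.
by apply: eq_bigr => i _; rewrite coef_rVpoly_ord.
Qed.

Lemma moment_condD c P Q t :
  moment_cond c (P + Q) t = moment_cond c P t + moment_cond c Q t.
Proof. by rewrite -big_split; apply: eq_bigr => i _; rewrite coefD mulrDl. Qed.

Lemma moment_cond_Xn c t : moment_cond c 'X^K t = c K t.
Proof.
rewrite /moment_cond big_ord_recr /= coefXn eqxx mul1r big1 ?add0r // => i _.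
by rewrite coefXn ltn_eqF ?mul0r.
Qed.

Lemma moment_cond_monic c x t :
  moment_cond c ('X^K + rVpoly x) t = c K t + (x *m moment_mx c) 0 (enum_rank t).
Proof. by rewrite moment_condD moment_cond_Xn moment_cond_rVpoly. Qed.

Lemma moment_cond_shift c c' x t : (forall i t, c' i.+1 t = c i t) ->
  moment_cond c' (1 + rVpoly x * 'X) t = c' 0 t + (x *m moment_mx c) 0 (enum_rank t).
Proof.
move=> c'S; rewrite /moment_cond big_ord_recl coefD coefC coefMX /= addr0 mul1r.
rewrite -moment_cond_rVpoly moment_cond_small ?size_poly //; congr (_ + _).
by apply: eq_bigr => i _; rewrite coefD coefMX coefC /= add0r c'S.
Qed.

Lemma moment_cond_eq0_row c (v : T -> F) x :
  (forall t, v t + (x *m moment_mx c) 0 (enum_rank t) = 0) <->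
  x *m moment_mx c = \row_s - v (enum_val s).
Proof.
split=> [vx0|->] => [|t]; last by rewrite mxE enum_rankK addrN.
apply/rowP => s; rewrite [RHS]mxE.
by have /eqP := vx0 (enum_val s); rewrite enum_valK addrC addr_eq0 => /eqP.
Qed.

Lemma monic_moment_uniq c (orth : {poly F} -> Prop) : #|T| = K ->
    (forall P, (size P <= K.+1)%N -> orth P <-> forall t, moment_cond c P t = 0) ->
  (exists! P, [/\ (size P <= K.+1)%N, P`_K = 1 & orth P]) <->
  (forall x, x *m moment_mx c = 0 -> x = 0).
Proof.
move=> cardT orthE.
rewrite -(mulmx_exists_unique_iff (moment_mx c) (\row_s - c K (enum_val s))
  (esym cardT)).
apply: (exists_unique_param (f := fun x => 'X^K + rVpoly x)).
- by move=> x y /addrI /(can_inj rVpolyK).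
- move=> P [sP PK _]; exists (poly_rV (P - 'X^K)).
  rewrite poly_rV_K; first by rewrite addrC subrK.
  apply/leq_sizeP => j.
  rewrite leq_eqVlt => /predU1P [<-|Kj]; first by rewrite coefB coefXn eqxx PK subrr.
  by rewrite coefB coefXn gtn_eqF // nth_default ?subr0 // (leq_trans sP).
- move=> x; have sXn : (size ('X^K + rVpoly x)%R <= K.+1)%N.
    rewrite (leq_trans (size_polyD _ _)) // geq_max size_polyXn leqnn.
    exact/leqW/size_poly.
  rewrite -moment_cond_eq0_row; split=> [[_ _ /(orthE _ sXn) Px0] t|Px0].
    by rewrite -moment_cond_monic.
  split=> //; last by apply/(orthE _ sXn) => t; rewrite moment_cond_monic.
  by rewrite coefD coefXn eqxx nth_default ?size_poly ?addr0.
Qed.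

Lemma shifted_moment_uniq c c' (orth : {poly F} -> Prop) : #|T| = K ->
    (forall i t, c' i.+1 t = c i t) ->
    (forall P, (size P <= K.+1)%N -> orth P <-> forall t, moment_cond c' P t = 0) ->
  (exists! P, [/\ (size P <= K.+1)%N, P`_0 = 1 & orth P]) <->
  (forall x, x *m moment_mx c = 0 -> x = 0).
Proof.
move=> cardT c'S orthE.
rewrite -(mulmx_exists_unique_iff (moment_mx c) (\row_s - c' 0%N (enum_val s))
  (esym cardT)).
apply: (exists_unique_param (f := fun x => 1 + rVpoly x * 'X)).
- by move=> x y /addrI /mulIf; rewrite polyX_eq0 => /(_ isT) /(can_inj rVpolyK).
- move=> P [sP P0 _]; exists (poly_rV (\poly_(i < K) P`_i.+1)).
  rewrite poly_rV_K ?size_poly //; apply/polyP => -[|j].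
    by rewrite coefD coefMX coefC P0 addr0.
  rewrite coefD coefMX coefC add0r coef_poly; case: ltnP => // Kj.
  by rewrite nth_default // (leq_trans sP).
- move=> x; have sX : (size (1 + rVpoly x * 'X)%R <= K.+1)%N.
    rewrite (leq_trans (size_polyD _ _)) // geq_max size_poly1 /=.
    by rewrite (leq_trans (size_polyMleq _ _)) // size_polyX addn2 ltnS size_poly.
  rewrite -moment_cond_eq0_row; split=> [[_ _ /(orthE _ sX) Px0] t|Px0].
    by rewrite -(moment_cond_shift _ _ c'S).
  split=> //; last by apply/(orthE _ sX) => t; rewrite (moment_cond_shift _ _ c'S).
  by rewrite coefD coefMX coefC addr0.
Qed.

Lemma moment_kernel_trivial c (orth : {poly F} -> Prop) :
    (forall P, (size P <= K.+1)%N -> orth P <-> forall t, moment_cond c P t = 0) ->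
  (forall P, (size P <= K)%N -> orth P -> P = 0) <->
  (forall x, x *m moment_mx c = 0 -> x = 0).
Proof.
move=> orthE; split=> [orth0 x xA0 | ker0 P sP].
  apply: (can_inj rVpolyK); rewrite linear0; apply: orth0 (size_poly _ _) _.
  by apply/(orthE _ (leqW (size_poly _ _))) => t; rewrite moment_cond_rVpoly xA0 mxE.
move/(orthE _ (leqW sP)) => P0.
rewrite -(poly_rV_K sP) (ker0 (poly_rV P)) ?linear0 //; apply/rowP => s.
by rewrite -[s]enum_valK -moment_cond_rVpoly poly_rV_K // P0 mxE.
Qed.
End MomentSystem.

Section ComplexParts.
Variable R : realType.
Implicit Types x y : R[i].

Lemma ReD x y : complex.Re (x + y) = complex.Re x + complex.Re y.
Proof. exact: raddfD. Qed.
Lemma ImD x y : complex.Im (x + y) = complex.Im x + complex.Im y.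
Proof. exact: raddfD. Qed.
Lemma ReM x y :
  complex.Re (x * y) = complex.Re x * complex.Re y - complex.Im x * complex.Im y.
Proof. by case: x y => [a b] [c d]. Qed.
Lemma ImM x y :
  complex.Im (x * y) = complex.Re x * complex.Im y + complex.Im x * complex.Re y.
Proof. by case: x y => [a b] [c d]. Qed.
Lemma ReV x :
  complex.Re x^-1 = complex.Re x / (complex.Re x ^+ 2 + complex.Im x ^+ 2).
Proof. by case: x. Qed.
Lemma ImV x :
  complex.Im x^-1 = - (complex.Im x / (complex.Re x ^+ 2 + complex.Im x ^+ 2)).
Proof. by case: x. Qed.

Lemma normc_eq1_bound x : `|x| = 1 -> `|complex.Re x| <= 1 /\ `|complex.Im x| <= 1.
Proof.
move=> x1; have x2 : complex.Re x ^+ 2 + complex.Im x ^+ 2 = 1.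
  by apply: (@complexI R); rewrite add_Re2_Im2 x1 expr1n.
by split; rewrite -(@expr_le1 _ 2) // real_normK ?num_real // -x2 ?lerDl ?lerDr sqr_ge0.
Qed.
End ComplexParts.

Section ComplexMeasurable.
Context {R : realType}.
Implicit Types f g : R * R -> R[i].

Definition cmeasurable f := measurable_fun setT (fun w => complex.Re (f w)) /\
  measurable_fun setT (fun w => complex.Im (f w)).

Lemma measurable_inv : measurable_fun [set: R] GRing.inv.
Proof.
have mN0 : measurable [set r : R | r != 0] by apply: open_measurable; exact: open_neq.
have -> : [set: R] = [set r | r != 0] `|` [set 0].
  by apply/seteqP; split=> x //= _; case: (eqVneq x 0); [right | left].
apply/(measurable_funU _ mN0 (measurable_set1 0)); split; last exact: measurable_fun_set1.
apply: open_continuous_measurable_fun; first exact: open_neq.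
by move=> x; rewrite inE => x0; exact: inv_continuous.
Qed.

Lemma cmeasurable_toC : cmeasurable (@toC R).
Proof. by split; [exact: measurable_fst | exact: measurable_snd]. Qed.

Lemma cmeasurableM f g :
  cmeasurable f -> cmeasurable g -> cmeasurable (fun w => f w * g w).
Proof.
move=> [f1 f2] [g1 g2].
split; [under eq_fun do rewrite ReM | under eq_fun do rewrite ImM].
  by apply: measurable_funB; exact: measurable_funM.
by apply: measurable_funD; exact: measurable_funM.
Qed.

Lemma cmeasurableV f : cmeasurable f -> cmeasurable (fun w => (f w)^-1).
Proof.
move=> [f1 f2].
have mn : measurable_fun setT
    (fun w => (complex.Re (f w) ^+ 2 + complex.Im (f w) ^+ 2)^-1).
  apply: (measurableT_comp measurable_inv).
  by apply: measurable_funD; exact: measurable_funX.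
split; [under eq_fun do rewrite ReV | under eq_fun do rewrite ImV].
  exact: measurable_funM.
by apply: measurableT_comp => //; exact: measurable_funM.
Qed.

Lemma cmeasurable_exprz f (k : int) : cmeasurable f -> cmeasurable (fun w => f w ^ k).
Proof.
have cmX n : cmeasurable f -> cmeasurable (fun w => f w ^+ n).
  move=> mf; elim: n => [|n IHn]; first by under eq_fun do rewrite expr0.
  by under eq_fun do rewrite exprS; exact: cmeasurableM.
by case: k => n mf; [exact: cmX | exact/cmeasurableV/cmX].
Qed.

Lemma cmeasurable_toC_exprz (k : int) : cmeasurable (fun w => toC w ^ k).
Proof. exact: cmeasurable_exprz cmeasurable_toC. Qed.

Lemma cmeasurable_monomial (a b : int) (i : nat) :
  cmeasurable (fun w => toC w ^ a * toC w ^+ i * toC w ^ b).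
Proof.
exact: cmeasurableM (cmeasurableM (cmeasurable_toC_exprz a) (cmeasurable_toC_exprz i))
  (cmeasurable_toC_exprz b).
Qed.

Lemma measurable_unit_circle : measurable (@unit_circle R).
Proof.
have mS : measurable_fun setT (fun p : R * R => p.1 ^+ 2 + p.2 ^+ 2).
  apply: measurable_funD; apply: measurable_funX.
    exact: measurable_fst.
  exact: measurable_snd.
by rewrite -[X in measurable X]setTI; exact: mS measurableT _ (measurable_set1 1).
Qed.
End ComplexMeasurable.

Section CircleIntegral.
Variables (R : realType) (mu : {measure set (R * R)%type -> \bar R}).
Hypotheses (mu_fin : (mu setT < +oo)%E) (mu_circ : on_circle mu).
Implicit Types (g h : R * R -> R) (f : R * R -> R[i]).

Definition circ_bounded g :=
  measurable_fun setT g /\ exists B, forall w, unit_circle w -> `|g w| <= B.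

Lemma integrable_circ_bounded g : circ_bounded g -> mu.-integrable setT (EFin \o g).
Proof.
move=> [mg [B gB]]; have mC := @measurable_unit_circle R.
rewrite (negligible_integrable (measurableC mC) measurableT) //; last first.
  exact/measurable_EFinP.
rewrite setTD setCK; apply: measurable_bounded_integrable => //.
- by apply: le_lt_trans mu_fin; apply: le_measure; rewrite ?inE.
- exact: measurable_funS mg.
- exists B; split; first exact: num_real.
  by move=> M BM w Cw; apply: le_trans (gB _ Cw) (ltW BM).
Qed.

Lemma circ_bounded_cst a : circ_bounded (fun _ => a).
Proof. by split=> //; exists `|a|. Qed.

Lemma circ_boundedD g h : circ_bounded g -> circ_bounded h ->
  circ_bounded (fun w => g w + h w).
Proof.
move=> [mg [B gB]] [mh [C hC]]; split; first exact: measurable_funD.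
by exists (B + C) => w Cw; rewrite (le_trans (ler_normD _ _)) ?lerD ?gB ?hC.
Qed.

Lemma circ_boundedB g h : circ_bounded g -> circ_bounded h ->
  circ_bounded (fun w => g w - h w).
Proof.
move=> [mg [B gB]] [mh [C hC]]; split; first exact: measurable_funB.
by exists (B + C) => w Cw; rewrite (le_trans (ler_normB _ _)) ?lerD ?gB ?hC.
Qed.

Lemma circ_boundedM g h : circ_bounded g -> circ_bounded h ->
  circ_bounded (fun w => g w * h w).
Proof.
move=> [mg [B gB]] [mh [C hC]]; split; first exact: measurable_funM.
by exists (B * C) => w Cw; rewrite normrM ler_pM ?gB ?hC.
Qed.

Definition ccirc_bounded f :=
  circ_bounded (fun w => complex.Re (f w)) /\ circ_bounded (fun w => complex.Im (f w)).

Lemma ccirc_bounded_unimodular f : cmeasurable f ->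
  (forall w, unit_circle w -> `|f w| = 1) -> ccirc_bounded f.
Proof.
by move=> [mRe mIm] f1; split; (split; last exists 1) => // w /f1 /normc_eq1_bound [].
Qed.

Lemma ccirc_boundedD f f' : ccirc_bounded f -> ccirc_bounded f' ->
  ccirc_bounded (fun w => f w + f' w).
Proof.
move=> [fRe fIm] [f'Re f'Im].
split; [under eq_fun do rewrite ReD | under eq_fun do rewrite ImD].
  exact: circ_boundedD.
exact: circ_boundedD.
Qed.

Lemma ccirc_boundedM f f' : ccirc_bounded f -> ccirc_bounded f' ->
  ccirc_bounded (fun w => f w * f' w).
Proof.
move=> [fRe fIm] [f'Re f'Im].
split; [under eq_fun do rewrite ReM | under eq_fun do rewrite ImM].
  by apply: circ_boundedB; exact: circ_boundedM.
by apply: circ_boundedD; exact: circ_boundedM.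
Qed.

Lemma ccirc_bounded_cst c : ccirc_bounded (fun _ => c).
Proof. by split; exact: circ_bounded_cst. Qed.

Lemma cintegralD f f' : ccirc_bounded f -> ccirc_bounded f' ->
  cintegral mu (fun w => f w + f' w) = cintegral mu f + cintegral mu f'.
Proof.
move=> [fRe fIm] [f'Re f'Im]; rewrite /cintegral.
under eq_Rintegral do rewrite ReD; under [X in Complex _ X]eq_Rintegral do rewrite ImD.
by rewrite !RintegralD //; exact: integrable_circ_bounded.
Qed.

Lemma cintegralMl c f : ccirc_bounded f ->
  cintegral mu (fun w => c * f w) = c * cintegral mu f.
Proof.
move=> [fRe fIm]; rewrite /cintegral.
under eq_Rintegral do rewrite ReM; under [X in Complex _ X]eq_Rintegral do rewrite ImM.
rewrite RintegralB ?RintegralD ?RintegralZl //; try exact: integrable_circ_bounded.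
- by case: c.
all: apply: integrable_circ_bounded; apply: circ_boundedM => //.
all: exact: circ_bounded_cst.
Qed.

Lemma cintegral_sum (I : Type) (s : seq I) (c : I -> R[i]) (F : I -> R * R -> R[i]) :
  (forall i, ccirc_bounded (F i)) ->
  cintegral mu (fun w => \sum_(i <- s) c i * F i w) =
  \sum_(i <- s) c i * cintegral mu (F i).
Proof.
move=> Fb; elim: s => [|i s IHs].
  under eq_fun do rewrite big_nil.
  by rewrite big_nil /cintegral /= !Rintegral_cst //= mul0r.
have sumb : ccirc_bounded (fun w => \sum_(j <- s) c j * F j w).
  elim: s {IHs} => [|j s IHs].
    by under eq_fun do rewrite big_nil; exact: ccirc_bounded_cst.
  under eq_fun do rewrite big_cons.
  by apply: ccirc_boundedD => //; apply: ccirc_boundedM => //; exact: ccirc_bounded_cst.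
under eq_fun do rewrite big_cons.
rewrite cintegralD ?cintegralMl ?IHs ?big_cons //.
by apply: ccirc_boundedM => //; exact: ccirc_bounded_cst.
Qed.

Lemma eq_cintegral_on_circle f f' : cmeasurable f -> cmeasurable f' ->
  (forall w, unit_circle w -> f w = f' w) -> cintegral mu f = cintegral mu f'.
Proof.
move=> [fRe fIm] [f'Re f'Im] ff'.
have ae_circ (P : R * R -> Prop) :
    (forall w, unit_circle w -> P w) -> {ae mu, forall w, P w}.
  move=> CP; exists (~` @unit_circle R); split => //.
    by apply: measurableC; exact: measurable_unit_circle.
  by move=> w /= nPw Cw; exact/nPw/CP.
rewrite /cintegral /Rintegral; congr (Complex (fine _) (fine _)).
  apply: ae_eq_integral => //; try exact/measurable_EFinP.
  by apply: ae_circ => w /ff' ->.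
apply: ae_eq_integral => //; try exact/measurable_EFinP.
by apply: ae_circ => w /ff' ->.
Qed.

Definition moment (k : int) := cintegral mu (fun w => toC w ^ k).

Lemma normc_toC (w : R * R) : unit_circle w -> `|toC w| = 1.
Proof. by move=> Cw; rewrite normc_def /= Cw sqrtr1. Qed.

Lemma normc_toC_exprz (w : R * R) (k : int) : unit_circle w -> `|toC w ^ k| = 1.
Proof.
by move=> /normc_toC w1; case: k => n; rewrite ?normfV normrX w1 expr1n ?invr1.
Qed.

Lemma ccirc_bounded_monomial (a b : int) (i : nat) :
  ccirc_bounded (fun w => toC w ^ a * toC w ^+ i * toC w ^ b).
Proof.
apply: ccirc_bounded_unimodular => [|w Cw]; first exact: cmeasurable_monomial.
by rewrite !normrM normrX normc_toC // expr1n !normc_toC_exprz // !mulr1.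
Qed.

Lemma cintegral_lpoly (a b : int) (P : {poly R[i]}) (d : nat) : (size P <= d)%N ->
  cintegral mu (fun w => lpoly a P (toC w) * toC w ^ b) =
  \sum_(i < d) P`_i * moment (a + i%:Z + b).
Proof.
move=> sP; have -> : (fun w => lpoly a P (toC w) * toC w ^ b) =
    (fun w => \sum_(i < d) P`_i * (toC w ^ a * toC w ^+ i * toC w ^ b)).
  apply/funext => w; rewrite /lpoly (horner_coef_wide _ sP) mulr_sumr mulr_suml.
  by apply: eq_bigr => i _; ring.
rewrite cintegral_sum => [|i]; last exact: ccirc_bounded_monomial.
apply: eq_bigr => i _; congr (_ * _); apply: eq_cintegral_on_circle => [||w Cw].
- exact: cmeasurable_monomial.
- exact: cmeasurable_toC_exprz.
(* [exprzDr] needs a unit: at [toC w = 0] the two integrands may differ. *)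
have zU : toC w \is a GRing.unit.
  by rewrite unitfE -normr_eq0 normc_toC ?oner_eq0.
by rewrite !exprzDr.
Qed.
End CircleIntegral.

Lemma card_tagged_ord (r : nat) (len : 'I_r -> nat) :
  #|{: {j : 'I_r & 'I_(len j)}}| = (\sum_(j < r) len j)%N.
Proof.
rewrite card_tagged sumnE big_map big_enum /=.
by apply: eq_bigr => j _; rewrite card_ord.
Qed.

Lemma tagged_range_iff (r : nat) (len : 'I_r -> nat) (lo hi : 'I_r -> int)
    (Q : 'I_r -> int -> Prop) :
  (forall j, hi j = lo j + (len j)%:Z - 1) ->
  (forall j p, lo j <= p <= hi j -> Q j p) <->
  (forall t : {j : 'I_r & 'I_(len j)}, Q (tag t) (lo (tag t) + (tagged t)%:Z)).
Proof.
move=> hlen; split=> [Qrange [j k] /=|Qt j p /andP [lop phi]].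
  by apply: Qrange; rewrite hlen; have := ltn_ord k; lia.
have k_lt : (`|p - lo j|%N < len j)%N by move: phi; rewrite hlen; lia.
have := Qt (Tagged (fun j => 'I_(len j)) (Ordinal k_lt)) => /=.
by have -> : lo j + `|p - lo j|%N%:Z = p by lia.
Qed.

Section OrthogonalityAsMoments.
Variables (R : realType) (r : nat) (mu : 'I_r -> {measure set (R * R)%type -> \bar R}).
Hypotheses (mu_fin : forall j, (mu j setT < +oo)%E)
  (mu_circ : forall j, on_circle (mu j)).
Variables (len : 'I_r -> nat) (lo hi : 'I_r -> int) (K : nat).
Hypothesis hlen : forall j, hi j = lo j + (len j)%:Z - 1.

Lemma orth_iff_moment_cond (a : int) (c : nat -> {j : 'I_r & 'I_(len j)} -> R[i])
    (P : {poly R[i]}) :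
  (forall i t, c i t = moment (mu (tag t)) (a + i%:Z - (lo (tag t) + (tagged t)%:Z))) ->
  (size P <= K.+1)%N ->
  (forall j p, lo j <= p <= hi j ->
     cintegral (mu j) (fun w => lpoly a P (toC w) * toC w ^ (- p)) = 0) <->
  (forall t, moment_cond K c P t = 0).
Proof.
move=> cE sP; apply: iff_trans (tagged_range_iff _ hlen) _.
have cint_cond (t : {j : 'I_r & 'I_(len j)}) : cintegral (mu (tag t))
    (fun w => lpoly a P (toC w) * toC w ^ (- (lo (tag t) + (tagged t)%:Z))) =
    moment_cond K c P t.
  rewrite (cintegral_lpoly (mu_fin _) (mu_circ _) _ _ sP).
  by apply: eq_bigr => i _; rewrite cE.
by split=> h t; move: (h t); rewrite /= cint_cond.
Qed.
End OrthogonalityAsMoments.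

Unset Implicit Arguments. Set Strict Implicit.

Theorem proposition2p8 (R : realType) (r : nat)
  (mu : 'I_r -> {measure set (R * R)%type -> \bar R})
  (hfin : forall j, (mu j setT < +oo)%E)
  (hcirc : forall j, on_circle (mu j))
  (hsupp : forall j, ~ finite_set (msupport (mu j)))
  (n m : 'I_r -> nat) :
  let N := sumn_vec n in
  let M := sumn_vec m in
  [/\ (* (a) <-> (b) *)
      (exists! P : {poly R[i]},
          [/\ (size P <= M + N + 1)%N, P`_(M + N) = 1
            & orth_typeI mu n m (lpoly (- M%:Z) P)]) <->
      (forall P : {poly R[i]}, (size P <= M + N)%N ->
          orth_typeI mu n m (lpoly (- M%:Z) P) -> P = 0),
      (* (a) <-> (c) *)
      (exists! P : {poly R[i]},
          [/\ (size P <= M + N + 1)%N, P`_(M + N) = 1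
            & orth_typeI mu n m (lpoly (- M%:Z) P)]) <->
      (exists! P : {poly R[i]},
          [/\ (size P <= M + N + 1)%N, P`_0 = 1
            & orth_typeII mu n m (lpoly (- M%:Z) P)])
    & (* (a) <-> (d) *)
      (exists! P : {poly R[i]},
          [/\ (size P <= M + N + 1)%N, P`_(M + N) = 1
            & orth_typeI mu n m (lpoly (- M%:Z) P)]) <->
      (forall P : {poly R[i]}, (size P <= M + N)%N ->
          orth_typeII mu n m (lpoly (1 - M%:Z) P) -> P = 0)].
Proof.
move=> N M; rewrite !addn1.
pose T := {j : 'I_r & 'I_(n j + m j)}.
have cardT : #|{: T}| = (M + N)%N by rewrite card_tagged_ord big_split addnC.
pose cI i (t : T) :=
  moment (mu (tag t)) (- M%:Z + i%:Z - (- (m (tag t))%:Z + (tagged t)%:Z)).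
pose cII i (t : T) :=
  moment (mu (tag t)) (- M%:Z + i%:Z - (- (m (tag t))%:Z + 1 + (tagged t)%:Z)).
have cIIS i t : cII i.+1 t = cI i t by rewrite /cII /cI; congr moment; lia.
have orthI (P : {poly R[i]}) : (size P <= (M + N).+1)%N ->
    orth_typeI mu n m (lpoly (- M%:Z) P) <-> forall t, moment_cond (M + N) cI P t = 0.
  by move=> sP; apply: orth_iff_moment_cond => // j; lia.
have orthII (P : {poly R[i]}) : (size P <= (M + N).+1)%N ->
    orth_typeII mu n m (lpoly (- M%:Z) P) <-> forall t, moment_cond (M + N) cII P t = 0.
  by move=> sP; apply: orth_iff_moment_cond => // j; lia.
have orthII_shift (P : {poly R[i]}) : (size P <= (M + N).+1)%N ->
    orth_typeII mu n m (lpoly (1 - M%:Z) P) <-> forall t, moment_cond (M + N) cI P t = 0.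
  move=> sP; apply: orth_iff_moment_cond => // [j|i t]; first lia.
  by rewrite /cI; congr moment; lia.
have normal := monic_moment_uniq cardT orthI.
split.
- exact: iff_trans normal (iff_sym (moment_kernel_trivial orthI)).
- exact: iff_trans normal (iff_sym (shifted_moment_uniq cardT cIIS orthII)).
- exact: iff_trans normal (iff_sym (moment_kernel_trivial orthII_shift)).
Qed.
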